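(* $12,13,14,15,16\notin\operatorname{Spec}(32_{65})$.
   Context: $32_{65}$ is the finite integral symmetric relation algebra with atoms $1'$, $a$, $b$, $c$, all symmetric, in which a diversity cycle $xyz$ (with $x,y,z\in\{a,b,c\}$) is mandatory (i.e. $x;y\ge z$) if it involves $a$ and forbidden (i.e. $x;y\cdot z=0$) otherwise. A representation over a set $U$ is an embedding into the full relation algebra on $U\times U$. $\operatorname{Spec}(A)$ is the set of cardinals $\alpha\le\omega$ such that $A$ has a representation over a set of cardinality $\alpha$. *)

From mathcomp Require Import all_boot.
Set Implicit Arguments. Unset Strict Implicit. Unset Printing Implicit Defensive.

Definition atom := 'I_4.
Definition id_at : atom := @Ordinal 4 0 isT.
Definition a_at : atom := @Ordinal 4 1 isT.
Definition b_at : atom := @Ordinal 4 2 isT.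
Definition c_at : atom := @Ordinal 4 3 isT.

(* Composition of atoms in 32_65.  1' is the identity; all atoms are symmetric,
   so for diversity atoms x,y: 1' <= x;y iff x = y; and for a diversity atom z,
   z <= x;y iff the cycle xyz involves a (mandatory), otherwise forbidden. *)
Definition atom_comp (x y : atom) : {set atom} :=
  if x == id_at then [set y]
  else if y == id_at then [set x]
  else [set z | ((z == id_at) && (x == y))
                || ((z != id_at) && [|| x == a_at, y == a_at | z == a_at])].

Definition ra_elt := {set atom}.
Definition ra_one : ra_elt := [set id_at].
Definition ra_conv (X : ra_elt) : ra_elt := X. (* all atoms symmetric *)
Definition ra_comp (X Y : ra_elt) : ra_elt :=
  \bigcup_(x in X) \bigcup_(y in Y) atom_comp x y.

Definition rel_diag (U : finType) : {set U * U} := [set p | p.1 == p.2].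
Definition rel_conv (U : finType) (R : {set U * U}) : {set U * U} :=
  [set p | (p.2, p.1) \in R].
Definition rel_comp (U : finType) (R S : {set U * U}) : {set U * U} :=
  [set p | [exists z, ((p.1, z) \in R) && ((z, p.2) \in S)]].

Definition representation (U : finType) (h : ra_elt -> {set U * U}) : Prop :=
  injective h /\
  (forall X Y, h (X :|: Y) = h X :|: h Y) /\
  (forall X, h (~: X) = ~: h X) /\
  h ra_one = rel_diag U /\
  (forall X, h (ra_conv X) = rel_conv (h X)) /\
  (forall X Y, h (ra_comp X Y) = rel_comp (h X) (h Y)).

Definition in_spec (n : nat) : Prop :=
  exists (U : finType) (h : ra_elt -> {set U * U}), #|U| = n /\ representation h.

From mathcomp Require Import all_boot.
Set Implicit Arguments. Unset Strict Implicit. Unset Printing Implicit Defensive.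

(** Every representation of 32_65 has at least 17 points.  Call v a
    bc-neighbour of u when (u, v) lies in b + c.  As x;y <= 1' + a for
    x, y in {b, c}, the bc-graph is triangle-free: bc-adjacent points have
    disjoint bc-neighbourhoods.  As a <= x;y for x, y in {b, c}, two
    a-related points have at least 4 common bc-neighbours, one for each
    pair (x, y).  Given u, take z with u a z (1' <= a;a) and w with u a w
    and w b z (a <= a;b): the common bc-neighbourhoods of u with z and with
    w are disjoint, so u has at least 8 bc-neighbours.  Finally, for x b y
    take w with x a w a y (b <= a;a); the bc-neighbourhoods of x and y and
    the point w are pairwise disjoint, which makes 8 + 8 + 1 points. *)

Section BooleanMorphism.

Variables (T U : finType) (h : {set T} -> {set U}).
Hypotheses (hU : {morph h : X Y / X :|: Y}) (hC : {morph h : X / ~: X}).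

Lemma morph_setT : h setT = setT.
Proof. by rewrite -(setUCr setT) hU hC setUCr. Qed.

Lemma morph_set0 : h set0 = set0.
Proof. by rewrite -setCT hC morph_setT setCT. Qed.

Lemma morph_setI (X Y : {set T}) : h (X :&: Y) = h X :&: h Y.
Proof. by rewrite -[X :&: Y]setCK setCI hC hU !hC -setCI setCK. Qed.

Lemma morph_subset (X Y : {set T}) : X \subset Y -> h X \subset h Y.
Proof. by move=> /setUidPr <-; rewrite hU subsetUl. Qed.

Lemma morph_disjoint (X Y : {set T}) : [disjoint X & Y] -> [disjoint h X & h Y].
Proof. by rewrite -!setI_eq0 -morph_setI => /eqP ->; rewrite morph_set0. Qed.

End BooleanMorphism.

Lemma ra_comp_set1 s t : ra_comp [set s] [set t] = atom_comp s t.
Proof. by rewrite /ra_comp !big_set1. Qed.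

Lemma id_in_comp_aa : id_at \in ra_comp [set a_at] [set a_at].
Proof. by rewrite ra_comp_set1 /atom_comp !inE. Qed.

Lemma b_in_comp_aa : b_at \in ra_comp [set a_at] [set a_at].
Proof. by rewrite ra_comp_set1 /atom_comp !inE. Qed.

Lemma a_in_comp_ab : a_at \in ra_comp [set a_at] [set b_at].
Proof. by rewrite ra_comp_set1 /atom_comp !inE. Qed.

Definition bc_atoms : ra_elt := [set b_at; c_at].

Lemma a_in_comp_bc s t :
  s \in bc_atoms -> t \in bc_atoms -> a_at \in ra_comp [set s] [set t].
Proof.
by rewrite ra_comp_set1 !inE => /orP [] /eqP -> /orP [] /eqP ->;
  rewrite /atom_comp !inE.
Qed.

Lemma comp_bc_atoms_disjoint : [disjoint ra_comp bc_atoms bc_atoms & bc_atoms].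
Proof.
rewrite disjoints_subset; apply/subsetP => x /bigcupP [s Bs /bigcupP [t Bt]].
move: Bs Bt; rewrite !inE => /orP [] /eqP -> /orP [] /eqP ->;
  by rewrite /atom_comp !inE; case: x => [[|[|[|[|]]]] ?].
Qed.

Section Representation.

Variables (U : finType) (h : ra_elt -> {set U * U}).
Hypotheses (h_inj : injective h) (hU : {morph h : X Y / X :|: Y})
  (hC : {morph h : X / ~: X}) (h_one : h ra_one = rel_diag U)
  (h_conv : forall X, h (ra_conv X) = rel_conv (h X))
  (h_comp : forall X Y, h (ra_comp X Y) = rel_comp (h X) (h Y)).

Lemma rep_diag u : (u, u) \in h [set id_at].
Proof. by rewrite (h_one : h [set id_at] = _) inE. Qed.

Lemma rep_sym X u v : ((u, v) \in h X) = ((v, u) \in h X).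
Proof. by rewrite {1}(h_conv X : h X = _) inE. Qed.

Lemma rep_witness X Y r u v :
  r \in ra_comp X Y -> (u, v) \in h [set r] ->
  exists2 w, (u, w) \in h X & (w, v) \in h Y.
Proof.
rewrite -sub1set => /(morph_subset hU) /subsetP sub /sub.
by rewrite h_comp inE => /existsP [w /andP [uw wv]]; exists w.
Qed.

Lemma rep_atom_eq s t p : p \in h [set s] -> p \in h [set t] -> s = t.
Proof.
move=> ps pt; case: (eqVneq s t) => // st.
have D : [disjoint h [set s] & h [set t]].
  by apply: (morph_disjoint hU hC); rewrite // disjoints1 in_set1.
by rewrite (disjointFr D ps) in pt.
Qed.

Lemma mem_rep_bc s p : s \in bc_atoms -> p \in h [set s] -> p \in h bc_atoms.
Proof. by move=> Bs; apply/subsetP/(morph_subset hU); rewrite sub1set. Qed.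

Lemma a_not_bc p : p \in h [set a_at] -> p \notin h bc_atoms.
Proof.
move=> pa; apply/negbT/(disjointFr _ pa).
by apply: (morph_disjoint hU hC); rewrite disjoints1 !inE.
Qed.

Definition bc_nbhd u : {set U} := [set v | (u, v) \in h bc_atoms].

Lemma bc_nbhd_disjoint u v :
  (u, v) \in h bc_atoms -> [disjoint bc_nbhd u & bc_nbhd v].
Proof.
move=> uv; rewrite disjoints_subset; apply/subsetP => y; rewrite !inE => uy.
apply/negP => vy.
have : (u, v) \in h (ra_comp bc_atoms bc_atoms).
  by rewrite h_comp inE; apply/existsP; exists y; rewrite uy rep_sym vy.
by rewrite (disjointFl (morph_disjoint hU hC comp_bc_atoms_disjoint) uv).
Qed.

Lemma card_common_bc_nbhd u v :
  (u, v) \in h [set a_at] -> 4 <= #|bc_nbhd u :&: bc_nbhd v|.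
Proof.
move=> uv; pose BB := setX bc_atoms bc_atoms.
have /fin_all_exists [f Hf] : forall st : atom * atom, exists y, st \in BB ->
    ((u, y) \in h [set st.1]) && ((y, v) \in h [set st.2]).
  move=> [s t].
  case: (boolP ((s, t) \in BB)) => [/setXP [Bs Bt] | notB].
    by have [y uy yv] := rep_witness (a_in_comp_bc Bs Bt) uv; exists y; rewrite uy.
  by exists u => stB; case/negP: notB.
have f_inj : {in BB &, injective f}.
  move=> [s t] [s' t'] /Hf /andP [/= us tv] /Hf /andP [/= us' tv'] fst.
  rewrite fst in us tv.
  by rewrite (rep_atom_eq us us') (rep_atom_eq tv tv').
have f_sub : f @: BB \subset bc_nbhd u :&: bc_nbhd v.
  apply/subsetP => _ /imsetP [[s t] /[dup] /setXP [Bs Bt] /Hf /andP [uy yv] ->].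
  by rewrite !inE (mem_rep_bc Bs uy) rep_sym (mem_rep_bc Bt yv).
by have := subset_leq_card f_sub; rewrite card_in_imset // cardsX cards2.
Qed.

Lemma bc_nbhd_card u : 8 <= #|bc_nbhd u|.
Proof.
have [z uz _] := rep_witness id_in_comp_aa (rep_diag u).
have [w uw wz] := rep_witness a_in_comp_ab uz.
have Dzw : [disjoint bc_nbhd z & bc_nbhd w].
  by apply: bc_nbhd_disjoint; rewrite rep_sym (mem_rep_bc _ wz) // !inE.
have D : [disjoint bc_nbhd u :&: bc_nbhd z & bc_nbhd u :&: bc_nbhd w].
  exact: disjointW (subsetIr _ _) (subsetIr _ _) Dzw.
have sub : (bc_nbhd u :&: bc_nbhd z) :|: (bc_nbhd u :&: bc_nbhd w) \subset bc_nbhd u.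
  by rewrite -setIUr subsetIl.
apply: leq_trans (subset_leq_card sub).
rewrite cardsU (disjoint_setI0 D) cards0 subn0.
exact: leq_add (card_common_bc_nbhd uz) (card_common_bc_nbhd uw).
Qed.

Lemma rep_card_ge17 : 17 <= #|U|.
Proof.
have [[x y] xy] : exists p, p \in h [set b_at].
  by apply/set0Pn; rewrite -(morph_set0 hU hC) (inj_eq h_inj) -card_gt0 cards1.
have [w xw wy] := rep_witness b_in_comp_aa xy.
have Dxy : [disjoint bc_nbhd x & bc_nbhd y].
  by apply: bc_nbhd_disjoint; rewrite (mem_rep_bc _ xy) // !inE.
have w_out : w \notin bc_nbhd x :|: bc_nbhd y.
  by rewrite !inE negb_or a_not_bc // rep_sym a_not_bc.
apply: leq_trans (max_card (mem (w |: (bc_nbhd x :|: bc_nbhd y)))).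
rewrite cardsU1 w_out cardsU (disjoint_setI0 Dxy) cards0 subn0.
exact: leq_add (bc_nbhd_card x) (bc_nbhd_card y).
Qed.

End Representation.

Theorem mainTheorem7 : forall n : nat, 12 <= n <= 16 -> ~ in_spec n.
Proof.
move=> n /andP [_ le_n16] [U [h [card_U [h_inj [hU [hC [h_one [h_conv h_comp]]]]]]]].
have := rep_card_ge17 h_inj hU hC h_one h_conv h_comp.
by rewrite card_U leqNgt ltnS le_n16.
Qed.
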